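(* Fix an online scheduler $\texttt{ALG}$ for the serial-parallel scheduling problem on $p$ processors that is oblivious to the parallel works of tasks, and fix a constant $c>0$. There exists a task arrival process $\mathcal{T}$ on which the expected competitive ratio of $\texttt{ALG}$ with $c$ speed augmentation for mean response time is $\Omega(p^{1/4})$; that is, $\mathbb{E}\big[\mathrm{TRT}^{\mathcal{T}}_{\texttt{ALG}}\big]\ge \Omega(p^{1/4})\cdot \mathrm{TRT}^{c\cdot\mathcal{T}}_{\texttt{OPT}}$, where the constant in $\Omega$ depends only on $c$.
   Context: Serial-parallel scheduling problem: $p$ identical processors. A task arrival process is a finite set of tasks $\tau_i=(\sigma_i,\pi_i,t_i)$, $i=1,\dots,n$, with arrival time $t_i\ge0$, serial work $\sigma_i$ and parallel work $\pi_i$, $1\le\pi_i/\sigma_i\le p$. A task is performed either by its serial job (work $\sigma_i$, at most one processor at any instant) or by its parallel job (work $\pi_i$, any number of processors, rate equal to number of processors); time is continuous, allocations may be fractional, preemption is allowed, and the implementation choice is irrevocable once started. Total response time $\mathrm{TRT}=\sum_i(f_i-t_i)$ with $f_i$ the completion time; mean response time is $\mathrm{TRT}/n$. $\mathrm{TRT}_{\texttt{OPT}}^{\mathcal{T}}$ is the optimal offline total response time. For $c>0$, $c\cdot\mathcal{T}$ is $\mathcal{T}$ with all works multiplied by $c$; comparing $\mathrm{TRT}_{\texttt{ALG}}^{\mathcal{T}}$ with $\mathrm{TRT}_{\texttt{OPT}}^{c\cdot\mathcal{T}}$ means $\texttt{ALG}$ has $c$ speed augmentation. $\texttt{ALG}$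 may be randomized (the expectation is over its randomness). Being oblivious to parallel works means $\texttt{ALG}$ learns each task's arrival time and serial work but not $\pi_i$. *)

From HB Require Import structures.
From mathcomp Require Import all_boot all_order all_algebra.
From mathcomp Require Import all_classical all_reals all_analysis.
Set Implicit Arguments. Unset Strict Implicit. Unset Printing Implicit Defensive.
Import Order.TTheory GRing.Theory Num.Theory.
Local Open Scope ring_scope.
Local Open Scope classical_set_scope.

Record task (R : realType) := Task { sig : R; par : R; arr : R }.

Section Sched.
Variable R : realType.

Definition work (tau : task R) (b : bool) : R := if b then par tau else sig tau.

Definition valid_instance (p : nat) (T : seq (task R)) : Prop :=
  sorted (fun a b : task R => arr a <= arr b) T /\
  all (fun tau : task R =>
     [&& 0 <= arr tau, 0 < sig tau & 1 <= par tau / sig tau <= p%:R]) T.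

Definition scale (c : R) (T : seq (task R)) : seq (task R) :=
  map (fun tau => Task (c * sig tau) (c * par tau) (arr tau)) T.

(* A schedule of the i-th task (i : nat, position in the sequence):
   - sched_par i : the implementation chosen (true = parallel job), irrevocable;
   - sched_W i s : cumulative work processed on task i up to time s
     (continuous time, fractional allocations, preemption allowed: the
     instantaneous rate of task i is the derivative of sched_W i);
   - sched_fin i : completion time of task i. *)
Record schedule := Schedule {
  sched_par : nat -> bool;
  sched_W : nat -> R -> R;
  sched_fin : nat -> R }.

Definition tsk (T : seq (task R)) (i : nat) : task R := nth (Task 0 0 0) T i.

(* Validity of a schedule of T on p identical processors:
   no work before arrival, nonnegative rates, a serial job uses at most one
   processor at any instant, at most p processors in use in total at any
   instant, and sched_fin i is the first time the chosen job's work is done. *)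
Definition valid_schedule (p : nat) (T : seq (task R)) (S : schedule) : Prop :=
  (forall i, (i < size T)%N ->
     (forall s, s <= arr (tsk T i) -> sched_W S i s = 0) /\
     (forall s u, s <= u -> sched_W S i s <= sched_W S i u) /\
     (~~ sched_par S i -> forall s u, s <= u ->
         sched_W S i u - sched_W S i s <= u - s) /\
     work (tsk T i) (sched_par S i) <= sched_W S i (sched_fin S i) /\
     (forall s, s < sched_fin S i ->
         sched_W S i s < work (tsk T i) (sched_par S i))) /\
  (forall s u, s <= u ->
     \sum_(i < size T) (sched_W S i u - sched_W S i s) <= p%:R * (u - s)).

Definition TRT (T : seq (task R)) (S : schedule) : R :=
  \sum_(i < size T) (sched_fin S i - arr (tsk T i)).

Definition TRT_OPT (p : nat) (T : seq (task R)) : R :=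
  inf [set TRT T S | S in [set S | valid_schedule p T S]].

(* Tasks that have arrived strictly before time s (a prefix, since instances
   are sorted by arrival), as seen by an algorithm oblivious to parallel works:
   arrival times and serial works only. *)
Definition seen_before (s : R) (T : seq (task R)) : seq (R * R) :=
  map (fun tau => (arr tau, sig tau)) [seq tau <- T | (arr tau < s)%R].

(* T' is indistinguishable from T before time s when running schedule S
   (computed on T): same arrivals/serial works before s, and the completion
   events of S observed before s are the same whether the parallel works are
   those of T or of T'. *)
Definition indist_before (s : R) (T T' : seq (task R)) (S : schedule) : Prop :=
  seen_before s T = seen_before s T' /\
  (forall i, (i < size [seq tau <- T | (arr tau < s)%R])%N ->
     forall u, u < s ->
       (work (tsk T i) (sched_par S i) <= sched_W S i u) =
       (work (tsk T' i) (sched_par S i) <= sched_W S i u)).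

(* A (randomized) online scheduler on p processors, oblivious to parallel
   works: for each random seed w, ALG w maps every instance to a valid
   schedule, and its decisions before time s only depend on the information
   revealed before s (arrivals, serial works, completions). *)
Definition oblivious_online_scheduler (Omega : Type) (p : nat)
    (ALG : Omega -> seq (task R) -> schedule) : Prop :=
  (forall w T, valid_instance p T -> valid_schedule p T (ALG w T)) /\
  (forall w T T' s, valid_instance p T -> valid_instance p T' ->
     indist_before s T T' (ALG w T) ->
     forall i, (i < size [seq tau <- T | (arr tau < s)%R])%N ->
       (forall u, u < s -> sched_W (ALG w T') i u = sched_W (ALG w T) i u) /\
       ((exists u, u < s /\ 0 < sched_W (ALG w T) i u) ->
          sched_par (ALG w T') i = sched_par (ALG w T) i)).

End Sched.

From HB Require Import structures.
From mathcomp Require Import all_boot all_order all_algebra.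
From mathcomp Require Import all_classical all_reals all_analysis.
From mathcomp Require Import measurable_realfun zify ring lra.
Set Implicit Arguments. Unset Strict Implicit. Unset Printing Implicit Defensive.
Import Order.TTheory GRing.Theory Num.Theory.
Local Open Scope ring_scope.
Local Open Scope classical_set_scope.

(* Take m = floor (p^(1/4)) and n = 2 m^2 tasks arriving at time 0, all with
   serial work 1; the parallel work of task i is p when x_i holds (its parallel
   job is then useless) and 1 otherwise, the x_i being independent Bernoulli
   (1/m).  Before task i has received any work nothing distinguishes x_i from
   its negation, so an oblivious scheduler commits to the implementation of
   task i independently of x_i.  A serial choice costs response time at least 1;
   a parallel choice with x_i costs at least m, except for the at most m such
   tasks finished by time m.  Hence every run has expected total response time
   at least n - m^2 = m^2, while running the x_i tasks serially and the others
   in parallel at rate p/n costs OPT at most n (c/m + c n/p) <= 6 c m in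
   expectation, so some x has ratio at least m / (6 c). *)

Section ValidSchedule.
Variables (R : realType) (p : nat) (T : seq (task R)).
Hypothesis T_valid : valid_instance p T.

Let task_valid i : (i < size T)%N ->
  [&& 0 <= arr (tsk T i), 0 < sig (tsk T i) &
      1 <= par (tsk T i) / sig (tsk T i) <= p%:R].
Proof. by move=> lt_i; case: T_valid => _ /all_nthP; apply. Qed.

Lemma arr_ge0 i : (i < size T)%N -> 0 <= arr (tsk T i).
Proof. by case/task_valid/and3P. Qed.

Lemma sig_gt0 i : (i < size T)%N -> 0 < sig (tsk T i).
Proof. by case/task_valid/and3P. Qed.

Lemma sig_le_work i b : (i < size T)%N -> sig (tsk T i) <= work (tsk T i) b.
Proof.
move=> lt_i; have /and3P[_ sig0 /andP[+ _]] := task_valid lt_i.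
by rewrite ler_pdivlMr // mul1r; case: b.
Qed.

Lemma work_gt0 i b : (i < size T)%N -> 0 < work (tsk T i) b.
Proof. by move=> lt_i; exact: lt_le_trans (sig_gt0 lt_i) (sig_le_work b lt_i). Qed.

Variable S : schedule R.
Hypothesis S_valid : valid_schedule p T S.

Lemma sched_W_le i : (i < size T)%N -> {homo sched_W S i : s u / s <= u}.
Proof. by move=> lt_i; case: S_valid => /(_ i lt_i) [_ [W_le _]] _; apply: W_le. Qed.

Lemma sched_W_lipschitz i : (i < size T)%N -> forall s u, s <= u ->
  sched_W S i u - sched_W S i s <= p%:R * (u - s).
Proof.
move=> lt_i s u le_su; case: S_valid => _ /(_ s u le_su); apply: le_trans.
rewrite (bigD1 (Ordinal lt_i)) //= lerDl; apply: sumr_ge0 => j _.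
by rewrite subr_ge0 sched_W_le.
Qed.

Lemma sched_W_before_arr i s : (i < size T)%N -> s <= arr (tsk T i) ->
  sched_W S i s = 0.
Proof. by move=> lt_i; case: S_valid => /(_ i lt_i) [W0 _] _; apply: W0. Qed.

Lemma work_le_sched_W_fin i : (i < size T)%N ->
  work (tsk T i) (sched_par S i) <= sched_W S i (sched_fin S i).
Proof. by move=> lt_i; case: S_valid => /(_ i lt_i) [_ [_ [_ []]]]. Qed.

Lemma arr_le_fin i : (i < size T)%N -> arr (tsk T i) <= sched_fin S i.
Proof.
move=> lt_i; rewrite leNgt; apply/negP => /ltW /(sched_W_before_arr lt_i) W0.
by have := work_le_sched_W_fin lt_i; rewrite W0 leNgt (work_gt0 _ lt_i).
Qed.

Lemma TRT_ge0 : 0 <= TRT T S.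
Proof. by apply: sumr_ge0 => i _; rewrite subr_ge0 arr_le_fin. Qed.

Lemma serial_work_le_response i : (i < size T)%N -> ~~ sched_par S i ->
  work (tsk T i) false <= sched_fin S i - arr (tsk T i).
Proof.
move=> lt_i serial; case: S_valid => /(_ i lt_i) [W0 [_ [Wser _]]] _.
have := Wser serial _ _ (arr_le_fin lt_i); rewrite (W0 _ (lexx _)) subr0.
by apply: le_trans; move: (work_le_sched_W_fin lt_i); rewrite (negbTE serial).
Qed.

Lemma sum_work_done_le t : 0 <= t ->
  \sum_(i < size T) (sched_fin S i <= t)%R%:R * work (tsk T i) (sched_par S i)
    <= p%:R * t.
Proof.
move=> t0; case: S_valid => _ /(_ 0 t t0); rewrite subr0; apply: le_trans.
apply: ler_sum => i _.
have W0 : sched_W S i 0 = 0 by rewrite sched_W_before_arr ?arr_ge0.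
rewrite W0 subr0; have [le_ft | _] := leP (sched_fin S i) t.
  by rewrite mul1r (le_trans (work_le_sched_W_fin _)) ?sched_W_le.
by rewrite mul0r -W0 sched_W_le.
Qed.

End ValidSchedule.

Lemma tsk_scale (R : realType) (c : R) T i : (i < size T)%N ->
  tsk (scale c T) i = Task (c * sig (tsk T i)) (c * par (tsk T i)) (arr (tsk T i)).
Proof. by move=> lt_i; rewrite /tsk (nth_map (Task 0 0 0)). Qed.

Lemma scale_valid (R : realType) p (c : R) T : 0 < c ->
  valid_instance p T -> valid_instance p (scale c T).
Proof.
move=> c_gt0 [T_sorted T_all]; split; first by rewrite sorted_map.
rewrite all_map; apply: sub_all T_all => tau /and3P[arr_ge0 sig_gt0 ratio] /=.
by rewrite arr_ge0 mulr_gt0 // -mulf_div divff ?gt_eqF // mul1r.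
Qed.

Lemma TRT_OPT_le_TRT (R : realType) p (T : seq (task R)) (S : schedule R) :
  valid_instance p T -> valid_schedule p T S -> TRT_OPT p T <= TRT T S.
Proof.
move=> T_valid S_valid; apply: ge_inf; last by exists S.
by exists 0 => _ [S' S'_valid <-]; apply: TRT_ge0 S'_valid.
Qed.

Section Ramp.
Variables (R : realType) (r w : R).
Hypotheses (r_gt0 : 0 < r) (w_gt0 : 0 < w).

Definition ramp (s : R) : R := Num.min (r * Num.max s 0) w.

Lemma ramp_le0 s : s <= 0 -> ramp s = 0.
Proof. by move=> s_le0; rewrite /ramp (max_r s_le0) mulr0 (min_l (ltW w_gt0)). Qed.

Lemma ramp_le s u : s <= u -> ramp s <= ramp u.
Proof.
by move=> le_su; rewrite /ramp le_min2 // ler_pM2l // le_max2.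
Qed.

Lemma ramp_lipschitz s u : s <= u -> ramp u - ramp s <= r * (u - s).
Proof.
move=> le_su; rewrite /ramp.
have max_lip : Num.max u 0 - Num.max s 0 <= u - s.
  by rewrite /Num.max; case: ifP; case: ifP; lra.
have lip : r * Num.max u 0 - r * Num.max s 0 <= r * (u - s).
  by rewrite -mulrBr ler_pM2l.
have mono : r * Num.max s 0 <= r * Num.max u 0.
  by rewrite ler_pM2l // le_max2.
have lip_ge0 : 0 <= r * (u - s) by rewrite mulr_ge0 ?subr_ge0 // ltW.
move: lip mono lip_ge0; set a := r * _ u _; set b := r * _ s _; set d := r * _.
by case: (leP a w); case: (leP b w); lra.
Qed.

Lemma ramp_end : ramp (w / r) = w.
Proof.
by rewrite /ramp max_l ?divr_ge0 ?ltW // mulrC divfK ?gt_eqF // minxx.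
Qed.

Lemma ramp_lt s : s < w / r -> ramp s < w.
Proof.
move=> lt_s; rewrite /ramp gt_min; apply/orP; left.
by have [_|_] := leP s 0; rewrite ?mulr0 // mulrC -ltr_pdivlMr.
Qed.

End Ramp.

Section RateSchedule.
Variables (R : realType) (T : seq (task R)) (b : nat -> bool) (r : nat -> R).

Definition rate_schedule : schedule R :=
  Schedule b
    (fun j s => ramp (r j) (work (tsk T j) (b j)) (s - arr (tsk T j)))
    (fun j => arr (tsk T j) + work (tsk T j) (b j) / r j).

Lemma TRT_rate_schedule :
  TRT T rate_schedule = \sum_(j < size T) work (tsk T j) (b j) / r j.
Proof. by apply: eq_bigr => j _; rewrite /= addrC addKr. Qed.

Lemma rate_schedule_valid p : valid_instance p T ->
  (forall j, (j < size T)%N -> 0 < r j) ->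
  (forall j, (j < size T)%N -> ~~ b j -> r j <= 1) ->
  \sum_(j < size T) r j <= p%:R ->
  valid_schedule p T rate_schedule.
Proof.
move=> T_valid r_gt0 serial_r_le1 sum_r_le.
have W_lipschitz j s u : (j < size T)%N -> s <= u ->
    ramp (r j) (work (tsk T j) (b j)) (u - arr (tsk T j))
    - ramp (r j) (work (tsk T j) (b j)) (s - arr (tsk T j)) <= r j * (u - s).
  move=> lt_j le_su; have le_shift := lerB le_su (lexx (arr (tsk T j))).
  by have := ramp_lipschitz _ (r_gt0 j lt_j) le_shift; rewrite opprB addrA subrK.
split=> [j lt_j | s u le_su] /=; last first.
  apply: le_trans (_ : \sum_(j < size T) r j * (u - s) <= _).
    by apply: ler_sum => j _; apply: W_lipschitz.
  by rewrite -mulr_suml ler_wpM2r ?subr_ge0.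
have rj_gt0 := r_gt0 j lt_j; have wj_gt0 := work_gt0 T_valid (b j) lt_j.
split; first by move=> s; rewrite -subr_le0; apply: ramp_le0.
split; first by move=> s u le_su; rewrite ramp_le // lerB.
split.
  move=> serial s u le_su; apply: le_trans (W_lipschitz _ _ _ lt_j le_su) _.
  by rewrite ler_piMl ?subr_ge0 ?serial_r_le1.
split; first by rewrite addrC addKr ramp_end.
by move=> s; rewrite -ltrBlDl; apply: ramp_lt.
Qed.
End RateSchedule.

Lemma nat_sign_change (R : realDomainType) (f : nat -> R) N :
  f 0%N <= 0 -> 0 < f N -> exists k, f k <= 0 /\ 0 < f k.+1.
Proof.
move=> f0_le0; elim: N => [|N IHN] fN_gt0; first by move: fN_gt0; rewrite ltNge f0_le0.
by have [fN_le0|/IHN] := leP (f N) 0; [exists N | apply].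
Qed.

Lemma exists_onset_window (R : realType) (f : R -> R) (a L e : R) :
  0 < L -> 0 < e -> {homo f : s u / s <= u} ->
  (forall s u, s <= u -> f u - f s <= L * (u - s)) ->
  f a <= 0 -> (exists u, 0 < f u) ->
  exists s, (forall u, u < s -> f u < e) /\ exists2 u, u < s & 0 < f u.
Proof.
move=> L_gt0 e_gt0 f_mono f_lip fa_le0 [u0 fu0_gt0].
pose d := e / (2 * L); have d_gt0 : 0 < d by rewrite divr_gt0 ?mulr_gt0.
pose g (k : nat) := f (a + k%:R * d).
have [N gN_gt0] : exists N, 0 < g N.
  have a_lt_u0 : a < u0.
    by rewrite ltNge; apply/negP => /f_mono; rewrite leNgt (le_lt_trans fa_le0).
  have : 0 <= (u0 - a) / d by rewrite divr_ge0 ?subr_ge0 ?ltW.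
  move=> /archi_boundP; set N := Num.Def.archi_bound _ => lt_N.
  exists N; apply: lt_le_trans fu0_gt0 (f_mono _ _ _).
  by rewrite ltW // -ltrBlDl -ltr_pdivrMr.
have g0_le0 : g 0%N <= 0 by rewrite /g mul0r addr0.
have [k [gk_le0 gk1_gt0]] := nat_sign_change g0_le0 gN_gt0.
exists (a + k.+2%:R * d); split; last first.
  by exists (a + k.+1%:R * d); rewrite // ltrD2l ltr_pM2r // ltr_nat.
move=> u lt_u; have [le_u|lt_ku] := leP u (a + k%:R * d).
  exact: le_lt_trans (f_mono _ _ le_u) (le_lt_trans gk_le0 e_gt0).
have lt_2d : u - (a + k%:R * d) < 2 * d.
  by rewrite ltrBlDl -addrA -mulrDl -natrD addn2.
have := f_lip _ _ (ltW lt_ku); rewrite -/(g k).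
have -> : e = L * (2 * d) by rewrite /d; field; rewrite gt_eqF.
rewrite -(ltr_pM2l L_gt0) in lt_2d; lra.
Qed.

Lemma seen_before_eq (R : realType) (s : R) (T T' : seq (task R)) :
  [seq (arr tau, sig tau) | tau <- T] = [seq (arr tau, sig tau) | tau <- T'] ->
  seen_before s T = seen_before s T'.
Proof.
by rewrite /seen_before -!(filter_map _ (fun z : R * R => z.1 < s)) => ->.
Qed.

Lemma lt_size_filter_arr (R : realType) p (T : seq (task R)) i s :
  valid_instance p T -> (i < size T)%N -> arr (tsk T i) < s ->
  (i < size [seq tau <- T | (arr tau < s)%R])%N.
Proof.
move=> [T_sorted _] lt_i lt_s.
have arr_le j : (j <= i)%N -> arr (tsk T j) <= arr (tsk T i).
  have le_trans_arr : transitive (fun a b : task R => arr a <= arr b).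
    by move=> b a c /le_trans; apply.
  move=> le_ji; apply: (sorted_leq_nth le_trans_arr _ _ T_sorted) => //.
  by rewrite inE (leq_ltn_trans le_ji lt_i).
have : all (fun tau => arr tau < s) (take i.+1 T).
  apply/(all_nthP (Task 0 0 0)) => j; rewrite size_takel // => lt_j.
  by rewrite nth_take // (le_lt_trans (arr_le j _)).
rewrite all_count size_takel // => /eqP count_take.
by rewrite size_filter -(cat_take_drop i.+1 T) count_cat count_take leq_addr.
Qed.

(* While task i has received less than its serial work, no completion event
   depends on its parallel work; the window just after it first receives work
   thus reveals the committed implementation without distinguishing T from T'. *)
Lemma oblivious_sched_par_eq (R : realType) p (Omega : Type)
    (ALG : Omega -> seq (task R) -> schedule R) w (T T' : seq (task R)) i :
  (0 < p)%N -> oblivious_online_scheduler p ALG ->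
  valid_instance p T -> valid_instance p T' -> (i < size T)%N ->
  size T' = size T -> (forall j, j != i -> tsk T' j = tsk T j) ->
  arr (tsk T' i) = arr (tsk T i) -> sig (tsk T' i) = sig (tsk T i) ->
  sched_par (ALG w T') i = sched_par (ALG w T) i.
Proof.
move=> p_gt0 [ALG_valid ALG_online] T_valid T'_valid lt_i size_T' tsk_T' arr_T' sig_T'.
set S := ALG w T; have S_valid : valid_schedule p T S by exact: ALG_valid.
have p_pos : (0 : R) < p%:R by rewrite ltr0n.
have W_arr : sched_W S i (arr (tsk T i)) <= 0.
  by rewrite (sched_W_before_arr S_valid lt_i).
have W_pos : exists u, 0 < sched_W S i u.
  exists (sched_fin S i); apply: lt_le_trans (work_le_sched_W_fin S_valid lt_i).
  exact: (work_gt0 T_valid (sched_par S i) lt_i).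
have [s [W_lt_sig [u0 lt_u0s W_u0_gt0]]] := exists_onset_window p_pos
  (sig_gt0 T_valid lt_i) (sched_W_le S_valid lt_i)
  (sched_W_lipschitz S_valid lt_i) W_arr W_pos.
have i_seen : (i < size [seq tau <- T | (arr tau < s)%R])%N.
  apply: (lt_size_filter_arr T_valid lt_i); apply: le_lt_trans lt_u0s.
  rewrite leNgt; apply/negP => /ltW /(sched_W_before_arr S_valid lt_i) W0.
  by move: W_u0_gt0; rewrite W0 ltxx.
have indist : indist_before s T T' S.
  split.
    apply/seen_before_eq/(eq_from_nth (x0 := (0, 0))) => [|j]; rewrite !size_map //.
    move=> lt_j; rewrite !(nth_map (Task 0 0 0)) ?size_T' //.
    rewrite -/(tsk T j) -/(tsk T' j).
    by have [->|/tsk_T' ->] := eqVneq j i; rewrite ?arr_T' ?sig_T'.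
  move=> j _ u lt_us; have [->|ne_ji] := eqVneq j i; last by rewrite tsk_T'.
  have lt_i' : (i < size T')%N by rewrite size_T'.
  rewrite !leNgt (lt_le_trans (W_lt_sig u lt_us)) ?(sig_le_work T_valid) //.
  by rewrite (lt_le_trans (W_lt_sig u lt_us)) // -sig_T' (sig_le_work T'_valid).
have [_ ALG_par] := ALG_online w T T' s T_valid T'_valid indist i i_seen.
by apply: ALG_par; exists u0.
Qed.

Section Flip.
Variable n : nat.

Definition flip (i : 'I_n) (x : {ffun 'I_n -> bool}) : {ffun 'I_n -> bool} :=
  [ffun j => (j == i) (+) x j].

Lemma flipK i : involutive (flip i).
Proof. by move=> x; apply/ffunP => j; rewrite !ffunE addKb. Qed.

Lemma flip_at i x : flip i x i = ~~ x i.
Proof. by rewrite ffunE eqxx. Qed.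

Lemma flip_neq i j x : j != i -> flip i x j = x j.
Proof. by rewrite ffunE => /negbTE ->. Qed.

End Flip.

Section HardInstance.
Variables (R : realType) (p n : nat).

(* [hard_task true] has parallel work [p]: its parallel job is never faster
   than its serial one. *)
Definition hard_task (b : bool) : task R := Task 1 (if b then p%:R else 1) 0.

Definition hard_instance (x : {ffun 'I_n -> bool}) : seq (task R) :=
  map hard_task (fgraph x).

Lemma size_hard_instance x : size (hard_instance x) = n.
Proof. by rewrite size_map size_tuple card_ord. Qed.

Lemma tsk_hard_instance x (i : 'I_n) : tsk (hard_instance x) i = hard_task (x i).
Proof.
by rewrite /tsk (nth_map false) ?nth_fgraph_ord // size_tuple card_ord.
Qed.

Hypothesis p_gt0 : (0 < p)%N.

Lemma hard_instance_valid x : valid_instance p (hard_instance x).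
Proof.
split.
  rewrite sorted_map; case: (fgraph x : seq bool) => //= j l.
  by elim: l j => //= k l IHl j; apply/andP; split; [exact: lexx | exact: IHl].
rewrite all_map; apply/allP => b _ /=; rewrite lexx ltr01 divr1.
by case: b; rewrite lexx ler1n p_gt0 ?andbT.
Qed.

Lemma hard_sched_par_flip (Omega : Type) (ALG : Omega -> seq (task R) -> schedule R)
    w i x :
  oblivious_online_scheduler p ALG ->
  sched_par (ALG w (hard_instance (flip i x))) i = sched_par (ALG w (hard_instance x)) i.
Proof.
move=> ALG_obl.
apply: (@oblivious_sched_par_eq _ _ _ _ _ (hard_instance x) _ _ p_gt0 ALG_obl).
- exact: hard_instance_valid.
- exact: hard_instance_valid.
- by rewrite size_hard_instance.
- by rewrite !size_hard_instance.
- move=> j ne_ji; have [lt_jn|ge_jn] := ltnP j n; last first.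
    by rewrite /tsk !nth_default ?size_hard_instance.
  by rewrite -[j]/(val (Ordinal lt_jn)) !tsk_hard_instance flip_neq.
- by rewrite !tsk_hard_instance.
- by rewrite !tsk_hard_instance.
Qed.

Lemma hard_TRT_lb x (S : schedule R) t :
  valid_schedule p (hard_instance x) S -> 0 <= t ->
  \sum_(i < n) ((~~ sched_par S i)%:R + t * (sched_par S i && x i)%:R) - t ^+ 2
    <= TRT (hard_instance x) S.
Proof.
move=> S_valid t_ge0; set T := hard_instance x.
have T_valid : valid_instance p T by exact: hard_instance_valid.
have lt_i (i : 'I_n) : (i < size T)%N by rewrite size_hard_instance.
have done_le : \sum_(i < n) (sched_par S i && x i && (sched_fin S i <= t)%R)%:R <= t.
  have p_pos : (0 : R) < p%:R by rewrite ltr0n.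
  rewrite -(ler_pM2l p_pos) mulr_sumr.
  have := sum_work_done_le T_valid S_valid t_ge0; rewrite size_hard_instance.
  apply: le_trans; apply: ler_sum => i _; rewrite tsk_hard_instance.
  by case: (sched_par S i); case: (x i); case: (_ <= t)%R;
    rewrite /= ?mulr0 ?mul0r ?mulr1 ?mul1r ?ler01 ?ler0n.
have response_ge (i : 'I_n) :
    (~~ sched_par S i)%:R + t * (sched_par S i && x i && (t < sched_fin S i)%R)%:R
      <= sched_fin S i.
  have := arr_le_fin T_valid S_valid (lt_i i); rewrite tsk_hard_instance /= => fin_ge0.
  case: (boolP (sched_par S i)) => [par|ser] /=.
    by rewrite add0r; case: (x i); case: ltP => [/ltW|_]; rewrite /= ?mulr1 ?mulr0.
  rewrite mulr0 addr0; have := serial_work_le_response T_valid S_valid (lt_i i) ser.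
  by rewrite tsk_hard_instance subr0.
have split_ind (i : 'I_n) : (sched_par S i && x i)%:R =
    (sched_par S i && x i && (t < sched_fin S i)%R)%:R
    + (sched_par S i && x i && (sched_fin S i <= t)%R)%:R :> R.
  by case: (_ && _) => //=; case: (ltP t (sched_fin S i)); rewrite ?addr0 ?add0r.
have -> : TRT T S = \sum_(i < n) sched_fin S i.
  rewrite /TRT /T size_hard_instance; apply: eq_bigr => i _.
  by rewrite tsk_hard_instance subr0.
apply: le_trans (ler_sum _ (fun i _ => response_ge i)).
under eq_bigr => i _ do rewrite split_ind mulrDr addrA.
by rewrite big_split /= -mulr_sumr lerBlDr lerD2l expr2 ler_wpM2l.
Qed.

Lemma hard_TRT_OPT_le x (c : R) : (0 < n)%N -> (n <= p)%N -> 0 < c ->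
  TRT_OPT p (scale c (hard_instance x))
    <= \sum_(i < n) (if x i then c else c * n%:R / p%:R).
Proof.
move=> n_gt0 le_np c_gt0; set xs := nth false (fgraph x).
have T_valid := scale_valid c_gt0 (hard_instance_valid x).
pose r j : R := if xs j then 1 else p%:R / n%:R.
have n_pos : (0 : R) < n%:R by rewrite ltr0n.
have r_le j : r j <= p%:R / n%:R.
  by rewrite /r; case: (xs j); rewrite // ler_pdivlMr // mul1r ler_nat.
have r_gt0 j : 0 < r j.
  by rewrite /r; case: (xs j); rewrite // divr_gt0 ?ltr0n.
have sum_r : \sum_(j < size (scale c (hard_instance x))) r j <= p%:R.
  rewrite size_map size_hard_instance.
  apply: (@le_trans _ _ (\sum_(j < n) (p%:R / n%:R))); first exact: ler_sum.
  by rewrite sumr_const card_ord -[_ *+ n]mulr_natr divfK ?gt_eqF.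
have serial_r j : ~~ ~~ xs j -> r j <= 1 by rewrite negbK /r => ->.
have S_valid := rate_schedule_valid (b := fun j => ~~ xs j) T_valid
  (fun j _ => r_gt0 j) (fun j _ => serial_r j) sum_r.
apply: le_trans (TRT_OPT_le_TRT T_valid S_valid) _.
rewrite TRT_rate_schedule size_map size_hard_instance; apply: ler_sum => i _.
rewrite tsk_scale ?size_hard_instance // tsk_hard_instance /r /xs nth_fgraph_ord.
by case: (x i); rewrite /= ?mulr1 ?divr1 // invf_div mulrA.
Qed.
End HardInstance.

Section BernoulliWeights.
Variables (R : realType) (n : nat) (q : R).

Definition bern_wt (x : {ffun 'I_n -> bool}) : R :=
  \prod_(j < n) (if x j then q else 1 - q).

Lemma sum_bern_wt : \sum_x bern_wt x = 1.
Proof.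
rewrite -(bigA_distr_bigA (fun (j : 'I_n) (b : bool) => if b then q else 1 - q)).
by rewrite big1 // => j _; rewrite big_bool /= subrKC.
Qed.

Lemma bern_wt_ge0 x : 0 <= q <= 1 -> 0 <= bern_wt x.
Proof.
by case/andP=> q_ge0 q_le1; apply: prodr_ge0 => j _; case: (x j); rewrite ?subr_ge0.
Qed.

Lemma sum_bern_wt_indep i (g : {ffun 'I_n -> bool} -> R) :
  (forall x, g (flip i x) = g x) ->
  \sum_x bern_wt x * (g x * (x i)%:R) = q * \sum_x bern_wt x * g x.
Proof.
move=> g_flip.
pose h (x : {ffun 'I_n -> bool}) :=
  \prod_(j < n | j != i) (if x j then q else 1 - q) * g x.
have bern_wtE x : bern_wt x * g x = (if x i then q else 1 - q) * h x.
  by rewrite /bern_wt (bigD1 i) //= mulrA.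
have sum_h_flip : \sum_(x : {ffun 'I_n -> bool} | ~~ x i) h x =
                  \sum_(x : {ffun 'I_n -> bool} | x i) h x.
  rewrite (reindex_inj (can_inj (flipK i))) /=; apply: eq_big => x.
    by rewrite flip_at negbK.
  move=> _; rewrite /h g_flip; congr (_ * _); apply: eq_bigr => j ne_ji.
  by rewrite flip_neq.
rewrite (bigID (fun x : {ffun 'I_n -> bool} => x i)) /= addrC big1 ?add0r; last first.
  by move=> x /negbTE ->; rewrite !mulr0.
rewrite [X in _ = q * X](bigID (fun x : {ffun 'I_n -> bool} => x i)) /=.
under eq_bigr => x xi do rewrite xi mulr1 bern_wtE xi.
under [X in _ = q * (X + _)]eq_bigr => x xi do rewrite bern_wtE xi.
under [X in _ = q * (_ + X)]eq_bigr => x /negbTE xi do rewrite bern_wtE xi.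
by rewrite -!mulr_sumr sum_h_flip -mulrDl subrKC mul1r.
Qed.

Lemma sum_bern_wt_coord i : \sum_x bern_wt x * (x i)%:R = q.
Proof.
have := @sum_bern_wt_indep i (fun _ => 1) (fun _ => erefl).
under eq_bigr do rewrite mul1r; under [in RHS]eq_bigr do rewrite mulr1.
by rewrite sum_bern_wt mulr1.
Qed.
End BernoulliWeights.

Lemma hard_expected_TRT_lb (R : realType) p n (Omega : Type)
    (ALG : Omega -> seq (task R) -> schedule R) w (q t : R) :
  (0 < p)%N -> oblivious_online_scheduler p ALG ->
  0 <= q <= 1 -> t * q = 1 -> 0 <= t ->
  n%:R - t ^+ 2 <= \sum_(x : {ffun 'I_n -> bool})
    bern_wt q x * TRT (hard_instance R p x) (ALG w (hard_instance R p x)).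
Proof.
move=> p_gt0 ALG_obl q01 tq t_ge0.
pose a i (x : {ffun 'I_n -> bool}) := sched_par (ALG w (hard_instance R p x)) i.
have expected_cost_i (i : 'I_n) :
    \sum_x bern_wt q x * ((~~ a i x)%:R + t * (a i x && x i)%:R) = 1.
  under eq_bigr => x _ do rewrite -mulnb natrM mulrDr (mulrCA _ t).
  rewrite big_split /= -mulr_sumr sum_bern_wt_indep; last first.
    by move=> x; rewrite /a hard_sched_par_flip.
  rewrite mulrA tq mul1r -big_split -[RHS](sum_bern_wt n q) /=.
  by apply: eq_bigr => x _; rewrite -mulrDr; case: (a i x); rewrite ?addr0 ?add0r mulr1.
apply: (@le_trans _ _ (\sum_x bern_wt q x *
    (\sum_(i < n) ((~~ a i x)%:R + t * (a i x && x i)%:R) - t ^+ 2))).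
  under eq_bigr => x _ do rewrite mulrBr mulr_sumr.
  rewrite sumrB exchange_big /= -mulr_suml sum_bern_wt mul1r.
  by under eq_bigr => i _ do rewrite expected_cost_i; rewrite sumr_const card_ord.
apply: ler_sum => x _; apply: ler_wpM2l; first exact: bern_wt_ge0.
apply: (hard_TRT_lb p_gt0 _ t_ge0); case: ALG_obl => ALG_valid _.
by apply: ALG_valid; apply: hard_instance_valid.
Qed.

Lemma hard_expected_TRT_OPT_le (R : realType) p n (q c : R) :
  (0 < n)%N -> (n <= p)%N -> 0 < c -> 0 <= q <= 1 ->
  \sum_(x : {ffun 'I_n -> bool})
    bern_wt q x * TRT_OPT p (scale c (hard_instance R p x))
    <= n%:R * (c * q + c * n%:R / p%:R).
Proof.
move=> n_gt0 le_np c_gt0 q01; set e := c * n%:R / p%:R.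
have e_ge0 : 0 <= e by rewrite divr_ge0 ?mulr_ge0 ?ler0n // ltW.
apply: (@le_trans _ _ (\sum_x bern_wt q x * \sum_(i < n) (c * (x i)%:R + e))).
  apply: ler_sum => x _; apply: ler_wpM2l; first exact: bern_wt_ge0.
  have p_gt0 : (0 < p)%N := leq_trans n_gt0 le_np.
  apply: le_trans (hard_TRT_OPT_le p_gt0 x n_gt0 le_np c_gt0) _; apply: ler_sum => i _.
  by case: (x i); rewrite ?mulr1 ?mulr0 ?add0r ?lerDl.
under eq_bigr => x _ do rewrite mulr_sumr.
have -> : n%:R * (c * q + e) = \sum_(i < n) (c * q + e).
  by rewrite sumr_const card_ord mulr_natl.
rewrite exchange_big /=; apply: ler_sum => i _.
under eq_bigr => x _ do rewrite mulrDr mulrCA.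
by rewrite big_split /= -mulr_sumr -mulr_suml sum_bern_wt_coord sum_bern_wt mul1r.
Qed.

Lemma exists_le_of_weighted_sum (R : realType) (I : finType) (a b : I -> R)
    (e : I -> \bar R) :
  (forall i, 0 <= a i) ->
  ((\sum_i a i * b i)%:E < \sum_i (a i)%:E * e i)%E ->
  exists i, ((b i)%:E <= e i)%E.
Proof.
move=> a_ge0 lt_sum; apply: contrapT => no_i; move: lt_sum; apply/negP.
rewrite -leNgt -sumEFin; apply: lee_sum => i _; rewrite EFinM.
apply: lee_wpmul2l; first by rewrite lee_fin.
have /negP : ~ ((b i)%:E <= e i)%E by move=> le_i; apply: no_i; exists i.
by rewrite -ltNge => /ltW.
Qed.

Lemma le_sum_integral (R : realType) d (Omega : measurableType d)
    (P : probability Omega R) (I : finType) (a : I -> R) (F : I -> Omega -> R) (b : R) :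
  (forall i, 0 <= a i) -> (forall i w, 0 <= F i w) ->
  (forall i, measurable_fun setT (F i)) ->
  0 <= b -> (forall w, b <= \sum_i a i * F i w) ->
  (b%:E <= \sum_i (a i)%:E * \int[P]_w (F i w)%:E)%E.
Proof.
move=> a_ge0 F_ge0 F_meas b_ge0 b_le.
have aF_meas i : measurable_fun setT (fun w => (a i)%:E * (F i w)%:E)%E.
  by apply: measurable_funeM; apply/measurable_EFinP.
have -> : (\sum_i (a i)%:E * \int[P]_w (F i w)%:E =
           \int[P]_w (\sum_i (a i)%:E * (F i w)%:E))%E.
  rewrite ge0_integral_sum // => [|i w _]; last by rewrite mule_ge0 ?lee_fin.
  apply: eq_bigr => i _; rewrite ge0_integralZl_EFin ?lee_fin //.
  by move=> w _; rewrite lee_fin.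
  exact/measurable_EFinP.
rewrite -[X in (X <= _)%E]mule1 -(probability_setT P) -integral_cst //.
apply: ge0_le_integral => //.
  exact: (emeasurable_sum _ aF_meas).
move=> w _; under eq_bigr => i _ do rewrite -EFinM.
by rewrite sumEFin lee_fin.
Qed.

Lemma exists_fourth_root_floor (R : realType) p : (0 < p)%N ->
  exists2 m : nat, (0 < m)%N && (m ^ 4 <= p)%N & p%:R `^ 4^-1 < m.+1%:R :> R.
Proof.
move=> p_gt0; set y : R := p%:R `^ 4^-1.
have y_ge0 : 0 <= y by exact: powR_ge0.
have y4 : y ^+ 4 = p%:R by rewrite -powR_mulrn // -powRrM mulVf ?powRr1.
have [le_my lt_ym] := andP (truncn_itv y_ge0).
exists (Num.truncn y) => //; rewrite truncn_gt0.
rewrite -(ler_pXn2r (n := 4)) ?nnegrE // expr1n y4 ler1n p_gt0 /=.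
by rewrite -(ler_nat R) natrX -y4 lerXn2r ?nnegrE.
Qed.

(* The bound of [hard_expected_TRT_OPT_le] for n = 2 m^2 and q = 1/m, scaled by
   K = 1/(12 c) and y = p^(1/4), against the bound n - m^2 of
   [hard_expected_TRT_lb] for t = m. *)
Lemma hard_ratio_gap (R : realType) (c y : R) (m p : nat) :
  0 < c -> (0 < m)%N -> (m ^ 4 <= p)%N -> 0 <= y -> y < m.+1%:R ->
  (12 * c)^-1 * y * ((2 * m ^ 2)%:R * (c / m%:R + c * (2 * m ^ 2)%:R / p%:R))
    < (2 * m ^ 2)%:R - m%:R ^+ 2.
Proof.
move=> c_gt0 m_gt0 le_m4p y_ge0 lt_ym.
have M_ge1 : 1 <= m%:R :> R by rewrite ler1n.
have p_pos : 0 < p%:R :> R by rewrite ltr0n (leq_trans _ le_m4p) // expn_gt0 m_gt0.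
set M : R := m%:R; set z := M ^+ 4 / p%:R.
have z01 : 0 <= z <= 1.
  apply/andP; split; first by rewrite divr_ge0 ?exprn_ge0 ?ler0n.
  by rewrite /z ler_pdivrMr // mul1r /M -natrX ler_nat.
have -> : (12 * c)^-1 * y * ((2 * m ^ 2)%:R * (c / M + c * (2 * m ^ 2)%:R / p%:R))
    = y * (2 * M + 4 * z) / 12.
  by rewrite /z /M natrM natrX; field; rewrite ?gt_eqF // ?ltr0n.
rewrite natrM natrX -/M -natr1 -/M in lt_ym *.
nra.
Qed.

Lemma exists_hard_instance (R : realType) (c y : R) p m (d : measure_display)
    (Omega : measurableType d) (P : probability Omega R)
    (ALG : Omega -> seq (task R) -> schedule R) :
  0 < c -> (2 <= p)%N -> (0 < m)%N -> (m ^ 4 <= p)%N -> 0 <= y -> y < m.+1%:R ->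
  oblivious_online_scheduler p ALG ->
  (forall T, valid_instance p T -> measurable_fun setT (fun w => TRT T (ALG w T))) ->
  exists x : {ffun 'I_(2 * m ^ 2) -> bool},
    (((12 * c)^-1 * y * TRT_OPT p (scale c (hard_instance R p x)))%:E
       <= \int[P]_w (TRT (hard_instance R p x) (ALG w (hard_instance R p x)))%:E)%E.
Proof.
move=> c_gt0 le2p m_gt0 le_m4p y_ge0 lt_ym ALG_obl ALG_meas.
have p_gt0 : (0 < p)%N by apply: leq_trans le2p.
set n := (2 * m ^ 2)%N; have n_gt0 : (0 < n)%N by rewrite muln_gt0 expn_gt0 m_gt0.
have le_np : (n <= p)%N by rewrite /n; nia.
have [ALG_valid _] := ALG_obl.
have hard_valid (x : {ffun 'I_n -> bool}) : valid_instance p (hard_instance R p x).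
  exact: hard_instance_valid.
pose q : R := m%:R^-1.
have q01 : 0 <= q <= 1 by rewrite invr_ge0 ler0n invf_le1 ?ler1n ?ltr0n.
apply: (exists_le_of_weighted_sum (a := bern_wt q)) => [x|].
  exact: bern_wt_ge0.
apply: (@lt_le_trans _ _ (n%:R - m%:R ^+ 2)%:E).
  rewrite lte_fin; under eq_bigr => x _ do rewrite mulrCA.
  rewrite -mulr_sumr; apply: le_lt_trans (hard_ratio_gap c_gt0 m_gt0 le_m4p y_ge0 lt_ym).
  have K_ge0 : 0 <= (12 * c)^-1 by rewrite invr_ge0 mulr_ge0 // ltW.
  rewrite ler_wpM2l ?mulr_ge0 //.
  exact: hard_expected_TRT_OPT_le.
apply: le_sum_integral => [x|x w|x||w].
- exact: bern_wt_ge0.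
- exact: (TRT_ge0 (hard_valid x) (ALG_valid w _ (hard_valid x))).
- exact/ALG_meas/hard_valid.
- by rewrite subr_ge0 -natrX ler_nat /n leq_pmull.
- by apply: hard_expected_TRT_lb => //; rewrite /q mulfV ?gt_eqF ?ltr0n.
Qed.

Theorem proposition9p1 (R : realType) (c : R) (hc : 0 < c) :
  exists K : R, 0 < K /\ exists p0 : nat, forall p : nat, (p0 <= p)%N ->
  forall (d : measure_display) (Omega : measurableType d)
         (P : probability Omega R) (ALG : Omega -> seq (task R) -> schedule R),
    oblivious_online_scheduler p ALG ->
    (forall T, valid_instance p T ->
       measurable_fun setT (fun w => TRT T (ALG w T))) ->
    exists T : seq (task R), valid_instance p T /\ (0 < size T)%N /\
      ((K * (p%:R `^ (4^-1)) * TRT_OPT p (scale c T))%:E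
        <= \int[P]_w (TRT T (ALG w T))%:E)%E.
Proof.
exists (12 * c)^-1; split; first by rewrite invr_gt0 mulr_gt0.
exists 2%N => p le2p d Omega P ALG ALG_obl ALG_meas.
have p_gt0 : (0 < p)%N by apply: leq_trans le2p.
have [m /andP[m_gt0 le_m4p] lt_ym] := exists_fourth_root_floor R p_gt0.
have [x le_x] := exists_hard_instance P hc le2p m_gt0 le_m4p (powR_ge0 _ _) lt_ym
  ALG_obl ALG_meas.
exists (hard_instance R p x); split; first exact: hard_instance_valid.
by rewrite size_hard_instance muln_gt0 expn_gt0 m_gt0.
Qed.
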